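(* Let $f_\theta$ be a model. For every $f^*\in\mathcal F$, $O_{f_\theta}(f^* )=\operatorname{rank}_{f_\theta}(f^* )$.
   Context: A model is a map $f:\mathbb R^d\times\mathbb R^M\to\mathbb R$, $(x,\theta)\mapsto f(x;\theta)=f_\theta(x)$, differentiable in both $x$ and $\theta$; its function space is $\mathcal F=\{f_\theta:\theta\in\mathbb R^M\}$. The loss $\ell:\mathbb R\times\mathbb R\to[0,\infty)$ is continuously differentiable with $\ell(u,v)=0$ iff $u=v$. For $f^*\in\mathcal F$, the target set is $\mathcal M_{f^*}=\{\theta: f_\theta=f^*\}$. A dataset from $f^*$ of size $n$ is $S=\{(x_i,f^*(x_i))\}_{i=1}^n$; the empirical loss of $g:\mathbb R^d\to\mathbb R$ is $\frac1n\sum_{i=1}^n\ell(g(x_i),f^*(x_i))$ (identically $0$ if $n=0$). The tangent function hyperplane at $\theta'$ is $\widetilde{\mathcal T}_{\theta'}=\{f(\cdot;\theta')+a^\top\nabla_\theta f(\cdot;\theta'):a\in\mathbb R^M\}$. $f^*$ has LLR-guarantee at $\theta'\in\mathcal M_{f^*}$ from $S$ if the set of minimizers of the empirical loss over $\widetilde{\mathcal T}_{\theta'}$ is exactly $\{f^*\}$; $f^*$ has $n$-sample LLR-guarantee if there exist a dataset $S$ from $f^*$ of size $n$ and $\theta'\in\mathcal M_{f^*}$ such that $f^*$ has LLR-guarantee at $\theta'$ from $S$. The optimistic sample size $O_{f_\theta}(f^* )$ is the smallest $n\geq 0$ such that $f^*$ has $n$-sample LLR-guarantee. The model rank at $\theta$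 is $\operatorname{rank}_{f_\theta}(\theta)=\dim\operatorname{span}\{\partial_{\theta_i}f(\cdot;\theta)\}_{i=1}^M$, and the model rank of $f^*$ is $\operatorname{rank}_{f_\theta}(f^* )=\min_{\theta'\in\mathcal M_{f^*}}\operatorname{rank}_{f_\theta}(\theta')$. *)

From HB Require Import structures.
From mathcomp Require Import all_boot all_order all_algebra.
From mathcomp Require Import all_classical all_reals all_analysis.
Set Implicit Arguments. Unset Strict Implicit. Unset Printing Implicit Defensive.
Import Order.TTheory GRing.Theory Num.Theory.
Import numFieldNormedType.Exports.
Local Open Scope ring_scope.

Section LLR.
Variable R : realType.

Definition is_model (d M : nat) (f : 'rV[R]_d -> 'rV[R]_M -> R) : Prop :=
  forall (x : 'rV[R]_d) (th : 'rV[R]_M),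
    differentiable (fun p : 'rV[R]_d * 'rV[R]_M => f p.1 p.2) (x, th).

Definition is_loss (l : R -> R -> R) : Prop :=
  [/\ forall u v, 0 <= l u v,
      forall u v, l u v = 0 <-> u = v,
      forall p : R * R, differentiable (fun q : R * R => l q.1 q.2) p &
      forall v : R * R, continuous (fun p : R * R => derive (fun q : R * R => l q.1 q.2) p v)].

Definition pderiv (d M : nat) (f : 'rV[R]_d -> 'rV[R]_M -> R)
  (th : 'rV[R]_M) (i : 'I_M) : 'rV[R]_d -> R :=
  fun x => derive (f x) th (delta_mx 0 i).

Definition fth (d M : nat) (f : 'rV[R]_d -> 'rV[R]_M -> R) (th : 'rV[R]_M)
  : 'rV[R]_d -> R := fun x => f x th.

Definition target_set (d M : nat) (f : 'rV[R]_d -> 'rV[R]_M -> R)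
  (fstar : 'rV[R]_d -> R) : set 'rV[R]_M := [set th | fth f th = fstar].

(* empirical loss of g on the dataset {(xs i, fstar (xs i))}_{i<n};
   for n = 0 this is 0 (0^-1 = 0 and the empty sum is 0). *)
Definition emp_loss (d n : nat) (l : R -> R -> R) (xs : 'I_n -> 'rV[R]_d)
  (fstar g : 'rV[R]_d -> R) : R :=
  (n%:R)^-1 * \sum_(i < n) l (g (xs i)) (fstar (xs i)).

Definition tangent_hyperplane (d M : nat) (f : 'rV[R]_d -> 'rV[R]_M -> R)
  (th : 'rV[R]_M) : set ('rV[R]_d -> R) :=
  [set g | exists a : 'rV[R]_M,
     g = fun x => f x th + \sum_(i < M) a 0 i * pderiv f th i x].

Definition LLR_guarantee (d M n : nat) (f : 'rV[R]_d -> 'rV[R]_M -> R)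
  (l : R -> R -> R) (fstar : 'rV[R]_d -> R) (th : 'rV[R]_M)
  (xs : 'I_n -> 'rV[R]_d) : Prop :=
  forall g : 'rV[R]_d -> R,
    (tangent_hyperplane f th g /\
     forall h, tangent_hyperplane f th h ->
       emp_loss l xs fstar g <= emp_loss l xs fstar h)
    <-> g = fstar.

(* n-sample LLR-guarantee; a dataset of size n is n distinct inputs *)
Definition n_sample_LLR (d M : nat) (f : 'rV[R]_d -> 'rV[R]_M -> R)
  (l : R -> R -> R) (fstar : 'rV[R]_d -> R) (n : nat) : Prop :=
  exists (xs : 'I_n -> 'rV[R]_d) (th : 'rV[R]_M),
    injective xs /\ target_set f fstar th /\ LLR_guarantee f l fstar th xs.

Definition is_optimistic_sample_size (d M : nat) (f : 'rV[R]_d -> 'rV[R]_M -> R)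
  (l : R -> R -> R) (fstar : 'rV[R]_d -> R) (n : nat) : Prop :=
  n_sample_LLR f l fstar n /\ forall m, n_sample_LLR f l fstar m -> (n <= m)%N.

(* r = dim span {pderiv f th i}_{i<M} (in the space of functions R^d -> R):
   there is a basis b_1..b_r of that span *)
Definition rank_at (d M : nat) (f : 'rV[R]_d -> 'rV[R]_M -> R)
  (th : 'rV[R]_M) (r : nat) : Prop :=
  exists b : 'I_r -> ('rV[R]_d -> R),
    [/\ forall j, exists c : 'I_M -> R,
          b j = fun x => \sum_(i < M) c i * pderiv f th i x,
        forall i, exists c : 'I_r -> R,
          pderiv f th i = fun x => \sum_(j < r) c j * b j x &
        forall c : 'I_r -> R,
          (forall x, \sum_(j < r) c j * b j x = 0) -> forall j, c j = 0].

Definition is_model_rank (d M : nat) (f : 'rV[R]_d -> 'rV[R]_M -> R)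
  (fstar : 'rV[R]_d -> R) (r : nat) : Prop :=
  (exists th, target_set f fstar th /\ rank_at f th r) /\
  forall th r', target_set f fstar th -> rank_at f th r' -> (r <= r')%N.

End LLR.

From HB Require Import structures.
From mathcomp Require Import all_boot all_order all_algebra.
From mathcomp Require Import all_classical all_reals all_analysis.
Set Implicit Arguments. Unset Strict Implicit. Unset Printing Implicit Defensive.
Import Order.TTheory GRing.Theory Num.Theory.
Local Open Scope ring_scope.

(* For finitely many functions p_1..p_M one constructs, inductively in M, a
   basis b_1..b_r of their span together with nodes y_1..y_r such that
   b_j(y_k) = delta_jk: a new function either lies in the current span or its
   residual after interpolation at the nodes is nonzero at some point x0,
   which becomes the next node.  At a parameter th with f_th = f*, a tangent
   function minimises the empirical loss iff its loss is zero, i.e. iff its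
   tangent direction vanishes on the data; so the LLR-guarantee from a data
   set means that the data determine tangent directions.  The nodes of the
   Lagrange basis of the partial derivatives are such a data set of size
   r = rank at th, and any such data set makes evaluation injective on the
   span, so it has at least r points.  It remains to minimise over the
   target set on both sides. *)

Definition ord_ext (T : Type) m (t0 : T) (F : 'I_m -> T) (k : nat) : T :=
  if insub k is Some i then F i else t0.

Lemma ord_extE (T : Type) m (t0 : T) (F : 'I_m -> T) (i : 'I_m) : ord_ext t0 F i = F i.
Proof. by rewrite /ord_ext valK. Qed.

Section Span.
Variables (R : fieldType) (X : Type).
Implicit Types (p b : nat -> X -> R) (g h : X -> R).

(* Families are indexed by nat, only the first m members mattering; this makes
   the inductive construction of Lagrange bases a matter of appending one
   member. *)
Definition in_span m p g :=
  exists c : nat -> R, g = fun x => \sum_(i < m) c i * p i x.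

Lemma eq_in_span m p g h : (forall x, g x = h x) -> in_span m p h -> in_span m p g.
Proof. by move=> /funext ->. Qed.

Lemma in_span0 m p : in_span m p (fun _ => 0).
Proof.
by exists (fun _ => 0); apply: funext => x; rewrite big1 // => i _; rewrite mul0r.
Qed.

Lemma in_spanD m p g h : in_span m p g -> in_span m p h ->
  in_span m p (fun x => g x + h x).
Proof.
move=> [c ->] [e ->]; exists (fun i => c i + e i); apply: funext => x.
by rewrite -big_split; apply: eq_bigr => i _; rewrite mulrDl.
Qed.

Lemma in_spanZ m p a g : in_span m p g -> in_span m p (fun x => a * g x).
Proof.
move=> [c ->]; exists (fun i => a * c i); apply: funext => x.
by rewrite mulr_sumr; apply: eq_bigr => i _; rewrite mulrA.
Qed.

Lemma in_span_sum m p r b (a : nat -> R) :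
  (forall j, (j < r)%N -> in_span m p (b j)) ->
  in_span m p (fun x => \sum_(j < r) a j * b j x).
Proof.
elim: r => [|r IHr] hb.
  by apply: (eq_in_span _ (in_span0 m p)) => x; rewrite big_ord0.
apply: (eq_in_span (h := fun x => \sum_(j < r) a j * b j x + a r * b r x)).
  by move=> x; rewrite big_ord_recr.
apply: in_spanD; first by apply: IHr => j /leqW; apply: hb.
exact/in_spanZ/hb.
Qed.

Lemma sum_kronecker r k (F : nat -> R) : (k < r)%N ->
  \sum_(j < r) ((j : nat) == k)%:R * F j = F k.
Proof.
move=> kr; rewrite (bigD1 (Ordinal kr)) //= eqxx mul1r big1 ?addr0 // => j jk.
rewrite (_ : (j : nat) == k = false) ?mul0r //.
by apply/negbTE; apply: contra jk => /eqP jk; apply/eqP/val_inj.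
Qed.

Lemma in_span_mem m p i : (i < m)%N -> in_span m p (p i).
Proof.
move=> im; exists (fun j => (j == i)%:R); apply: funext => x.
by rewrite (sum_kronecker (fun j => p j x)).
Qed.

Lemma in_span_trans m p s q g : (forall i, (i < m)%N -> in_span s q (p i)) ->
  in_span m p g -> in_span s q g.
Proof. by move=> hp [c ->]; apply: in_span_sum. Qed.

Lemma in_spanS m p g : in_span m p g -> in_span m.+1 p g.
Proof.
by apply: (in_span_trans (m := m) (p := p)) => i /leqW; apply: in_span_mem.
Qed.

Definition lagrange_nodes r b (ys : nat -> X) :=
  forall j k, (j < r)%N -> (k < r)%N -> b j (ys k) = (j == k)%:R.

Section Lagrange.
Variables (r : nat) (b : nat -> X -> R) (ys : nat -> X).
Hypothesis bys : lagrange_nodes r b ys.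

Lemma lagrange_coef (c : nat -> R) k : (k < r)%N ->
  \sum_(j < r) c j * b j (ys k) = c k.
Proof.
by move=> kr; rewrite -(sum_kronecker c kr); apply: eq_bigr => j _; rewrite bys // mulrC.
Qed.

Lemma lagrange_eq0 g : in_span r b g -> (forall k, (k < r)%N -> g (ys k) = 0) ->
  forall x, g x = 0.
Proof.
move=> [c ->] g0 x /=; rewrite big1 // => j _.
by move: (g0 j (ltn_ord j)); rewrite lagrange_coef // => ->; rewrite mul0r.
Qed.

Lemma lagrange_le_span r' B : (forall j, (j < r)%N -> in_span r' B (b j)) ->
  (r <= r')%N.
Proof.
move=> bB; pose E : 'M[R]_(r', r) := \matrix_(l, k) B l (ys k).
have : (1%:M <= E)%MS.
  apply/row_subP => j; apply/submxP; have [c bj] := bB j (ltn_ord j).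
  exists (\row_l c l); apply/rowP => k.
  rewrite !mxE (_ : (j == k)%:R = b j (ys k)); last by rewrite bys.
  by rewrite bj; apply: eq_bigr => l _; rewrite !mxE.
by move/mxrankS; rewrite mxrank1 => /leq_trans; apply; apply: rank_leq_row.
Qed.

Lemma lagrange_le_nodes n (xs : 'I_n -> X) :
  (forall g, in_span r b g -> (forall k, g (xs k) = 0) -> forall x, g x = 0) ->
  (r <= n)%N.
Proof.
move=> xs_uni; pose D : 'M[R]_(r, n) := \matrix_(j, k) b j (xs k).
suff /eqP <- : row_free D by apply: rank_leq_col.
apply: inj_row_free => v vD0.
pose c := ord_ext 0 (v 0).
have cE (j : 'I_r) : c j = v 0 j by apply: ord_extE.
have G0 := xs_uni _ (in_span_sum c (fun j jr => in_span_mem b jr)).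
apply/rowP => j; rewrite mxE -cE -(lagrange_coef c (ltn_ord j)) G0 // => k.
move/rowP/(_ k): vD0; rewrite !mxE; apply: eq_trans.
by apply: eq_bigr => i _; rewrite cE mxE.
Qed.

Section Extension.
Variables (g : X -> R) (x0 : X).
Hypotheses (g_nodes : forall k, (k < r)%N -> g (ys k) = 0) (g_x0 : g x0 = 1).

Definition extend_basis j := if (j < r)%N then fun x => b j x - b j x0 * g x else g.
Definition extend_nodes k := if (k < r)%N then ys k else x0.

Lemma extend_basis_last : extend_basis r = g.
Proof. by rewrite /extend_basis ltnn. Qed.

Lemma lagrange_nodes_extend : lagrange_nodes r.+1 extend_basis extend_nodes.
Proof.
move=> j k; rewrite ltnS leq_eqVlt => /predU1P[->|jr];
  rewrite ltnS leq_eqVlt => /predU1P[->|kr].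
- by rewrite extend_basis_last /extend_nodes ltnn g_x0 eqxx.
- by rewrite extend_basis_last /extend_nodes kr g_nodes // eq_sym ltn_eqF.
- by rewrite /extend_basis /extend_nodes jr ltnn g_x0 mulr1 subrr ltn_eqF.
- by rewrite /extend_basis /extend_nodes jr kr g_nodes // mulr0 subr0 bys.
Qed.

Lemma in_span_extend_basis j : (j < r)%N -> in_span r.+1 extend_basis (b j).
Proof.
move=> jr.
apply: (eq_in_span (h := fun x => extend_basis j x + b j x0 * extend_basis r x)).
  by move=> x; rewrite extend_basis_last /extend_basis jr subrK.
by apply: in_spanD; [apply/in_span_mem/leqW | apply/in_spanZ/in_span_mem].
Qed.

Lemma extend_basis_in_span m p : (forall j, (j < r)%N -> in_span m p (b j)) ->
  in_span m p g -> forall j, (j < r.+1)%N -> in_span m p (extend_basis j).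
Proof.
move=> bp gp j; rewrite ltnS leq_eqVlt => /predU1P[->|jr].
  by rewrite extend_basis_last.
apply: (eq_in_span (h := fun x => b j x + (- b j x0) * g x)).
  by move=> x; rewrite /extend_basis jr mulNr.
by apply: in_spanD; [apply: bp | apply: in_spanZ].
Qed.

End Extension.

Lemma lagrange_nodes_injective : injective (fun k : 'I_r => ys k).
Proof.
move=> j k /= yjk; apply/val_inj/eqP.
have := bys (ltn_ord j) (ltn_ord k); rewrite -yjk bys // eqxx.
by case: (_ == _) => //= /eqP; rewrite mulr0n oner_eq0.
Qed.

End Lagrange.

Definition lagrange_basis m p r b ys :=
  [/\ forall j, (j < r)%N -> in_span m p (b j),
      forall i, (i < m)%N -> in_span r b (p i) & lagrange_nodes r b ys].

Lemma lagrange_basis_step m p r b ys : lagrange_basis m p r b ys ->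
  exists r' b' ys', lagrange_basis m.+1 p r' b' ys'.
Proof.
case=> bp pb bys; set q := p m.
pose g x := q x - \sum_(j < r) q (ys j) * b j x.
have q_split x : q x = g x + \sum_(j < r) q (ys j) * b j x by rewrite subrK.
have g_nodes k : (k < r)%N -> g (ys k) = 0.
  by move=> kr; rewrite /g (lagrange_coef bys (fun j => q (ys j)) kr) subrr.
have bpS j : (j < r)%N -> in_span m.+1 p (b j) by move=> /bp/in_spanS.
have gp : in_span m.+1 p g.
  apply: (eq_in_span (h := fun x => q x + (-1) * \sum_(j < r) q (ys j) * b j x)).
    by move=> x; rewrite mulN1r.
  apply: in_spanD; first exact: in_span_mem.
  exact/in_spanZ/(in_span_sum (fun j => q (ys j)) bpS).
have [[x0 gx0]|g0] := pselect (exists x0, g x0 != 0); last first.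
  exists r, b, ys; split=> // i; rewrite ltnS leq_eqVlt => /predU1P[->|/pb //].
  exists (fun j => q (ys j)); apply: funext => x; rewrite -/q q_split.
  have /eqP -> : g x == 0 by apply/negPn/negP => gx; apply: g0; exists x.
  by rewrite add0r.
pose gn x := (g x0)^-1 * g x.
have gn_nodes k : (k < r)%N -> gn (ys k) = 0.
  by move=> kr; rewrite /gn g_nodes ?mulr0.
exists r.+1, (extend_basis r b gn x0), (extend_nodes r ys x0); split.
- by apply: extend_basis_in_span => //; apply: in_spanZ.
- move=> i; rewrite ltnS leq_eqVlt => /predU1P[->|/pb]; last first.
    by apply: in_span_trans => j; apply: in_span_extend_basis.
  apply: (eq_in_span (h := fun x => g x0 * extend_basis r b gn x0 r x
                                    + \sum_(j < r) q (ys j) * b j x)).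
    by move=> x; rewrite extend_basis_last /gn mulrA mulfV ?mul1r.
  apply: in_spanD; first by apply/in_spanZ/in_span_mem.
  by apply: (in_span_sum (fun j => q (ys j))) => j; apply: in_span_extend_basis.
- by apply: lagrange_nodes_extend => //; rewrite /gn mulVf.
Qed.

Lemma lagrange_basis_exists (x : X) m p : exists r b ys, lagrange_basis m p r b ys.
Proof.
elim: m => [|m [r [b [ys /lagrange_basis_step //]]]].
by exists 0%N, p, (fun _ => x); split.
Qed.

End Span.

Section EmpiricalLoss.
Variables (R : realType) (d n : nat) (l : R -> R -> R) (xs : 'I_n -> 'rV[R]_d).
Hypotheses (l_ge0 : forall u v, 0 <= l u v) (l_eq0 : forall u v, l u v = 0 <-> u = v).

Lemma emp_loss_ge0 fstar g : 0 <= emp_loss l xs fstar g.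
Proof. by rewrite /emp_loss mulr_ge0 ?invr_ge0 ?ler0n // sumr_ge0. Qed.

Lemma emp_loss_eq0 fstar g :
  emp_loss l xs fstar g = 0 <-> forall k, g (xs k) = fstar (xs k).
Proof.
split=> [|gxs]; last by rewrite /emp_loss big1 ?mulr0 // => k _; apply/l_eq0.
move=> /eqP; rewrite /emp_loss mulf_eq0 invr_eq0 pnatr_eq0.
move=> /orP[/eqP n0 k|/eqP g0 k].
  by have := ltn_ord k; rewrite {2}n0.
exact/l_eq0/(psumr_eq0P (fun i _ => l_ge0 _ _) g0).
Qed.

End EmpiricalLoss.

Section Tangent.
Variables (R : realType) (d M : nat) (f : 'rV[R]_d -> 'rV[R]_M -> R).
Local Notation X := 'rV[R]_d.

Definition tangent_family th : nat -> X -> R := ord_ext (fun _ => 0) (pderiv f th).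

Lemma sum_tangent_family th (c : nat -> R) x :
  \sum_(i < M) c i * tangent_family th i x = \sum_(i < M) c i * pderiv f th i x.
Proof. by apply: eq_bigr => i _; rewrite /tangent_family ord_extE. Qed.

Lemma in_span_tangentP th g :
  in_span M (tangent_family th) g <->
  exists a : 'rV[R]_M, g = fun x => \sum_(i < M) a 0 i * pderiv f th i x.
Proof.
split=> [[c ->]|[a ->]].
  exists (\row_i c i); apply: funext => x.
  by rewrite sum_tangent_family; apply: eq_bigr => i _; rewrite mxE.
exists (ord_ext 0 (a 0)); apply: funext => x.
by rewrite sum_tangent_family; apply: eq_bigr => i _; rewrite ord_extE.
Qed.

Definition tangent_unisolvent th n (xs : 'I_n -> X) :=
  forall g, in_span M (tangent_family th) g -> (forall k, g (xs k) = 0) ->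
  forall x, g x = 0.

Section LagrangeTangent.
Variables (th : 'rV[R]_M) (r : nat) (b : nat -> X -> R) (ys : nat -> X).
Hypothesis lb : lagrange_basis M (tangent_family th) r b ys.

Lemma lagrange_rank_at : rank_at f th r.
Proof.
have [bp pb bys] := lb; exists (fun j => b j); split.
- move=> j; have [a ->] := (in_span_tangentP th (b j)).1 (bp j (ltn_ord j)).
  by exists (fun i => a 0 i).
- move=> i; have [c] := pb i (ltn_ord i); rewrite /tangent_family ord_extE => ->.
  by exists (fun j => c j).
- move=> c c0 j; rewrite -(ord_extE 0 c) -(lagrange_coef bys _ (ltn_ord j)).
  by rewrite -[RHS](c0 (ys j)); apply: eq_bigr => k _; rewrite ord_extE.
Qed.

Lemma lagrange_nodes_unisolvent : tangent_unisolvent th (fun k : 'I_r => ys k).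
Proof.
have [_ pb bys] := lb; move=> g /(in_span_trans pb) g_span g_ys.
by apply: (lagrange_eq0 bys g_span) => k kr; apply: (g_ys (Ordinal kr)).
Qed.

Lemma lagrange_le_unisolvent n (xs : 'I_n -> X) : tangent_unisolvent th xs -> (r <= n)%N.
Proof.
have [bp _ bys] := lb; move=> xs_uni.
by apply: (lagrange_le_nodes bys) => g /(in_span_trans bp); apply: xs_uni.
Qed.

Lemma lagrange_le_rank_at r' : rank_at f th r' -> (r <= r')%N.
Proof.
have [bp _ bys] := lb; case=> B [_ pB _].
apply: (lagrange_le_span bys (B := ord_ext (fun _ => 0) B)) => j /bp.
apply: in_span_trans => i iM; rewrite -[i]/(val (Ordinal iM)) /tangent_family ord_extE.
have [c ->] := pB (Ordinal iM).
exists (ord_ext 0 c); apply: funext => x.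
by apply: eq_bigr => k _; rewrite !ord_extE.
Qed.

End LagrangeTangent.

Section Loss.
Variable l : R -> R -> R.
Hypotheses (l_ge0 : forall u v, 0 <= l u v) (l_eq0 : forall u v, l u v = 0 <-> u = v).

Lemma LLR_guaranteeP fstar th n (xs : 'I_n -> X) : fth f th = fstar ->
  LLR_guarantee f l fstar th xs <-> tangent_unisolvent th xs.
Proof.
move=> th_fstar; have fstarE x : fstar x = f x th by rewrite -th_fstar.
have fstar_tangent : tangent_hyperplane f th fstar.
  by exists 0; apply: funext => x; rewrite big1 ?addr0 // => i _; rewrite mxE mul0r.
have loss_fstar : emp_loss l xs fstar fstar = 0 by apply/emp_loss_eq0.
have tangent_loss (a : 'rV[R]_M) : emp_loss l xs fstar
    (fun x => f x th + \sum_(i < M) a 0 i * pderiv f th i x) = 0 <->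
    forall k, \sum_(i < M) a 0 i * pderiv f th i (xs k) = 0.
  rewrite emp_loss_eq0 //; split=> h k; move: (h k); rewrite fstarE.
    by rewrite -[RHS]addr0 => /addrI.
  by move=> ->; rewrite addr0.
split=> [llr g /in_span_tangentP[a ->] a_xs x | uni g].
  pose t x := f x th + \sum_(i < M) a 0 i * pderiv f th i x.
  have /(congr1 (fun h => h x)) : t = fstar.
    apply/llr; split=> [|h _]; first by exists a.
    by rewrite (proj2 (tangent_loss a)) // emp_loss_ge0.
  by rewrite /t fstarE -[RHS]addr0 => /addrI.
split=> [[[a ->] g_min] | ->]; last first.
  by split=> // h _; rewrite loss_fstar emp_loss_ge0.
have a_xs : forall k, \sum_(i < M) a 0 i * pderiv f th i (xs k) = 0.
  apply/tangent_loss/eqP; rewrite eq_le emp_loss_ge0 // andbT.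
  by rewrite -[X in _ <= X]loss_fstar; apply: g_min.
apply: funext => x; rewrite fstarE.
rewrite (uni (fun x => \sum_(i < M) a 0 i * pderiv f th i x)) ?addr0 //.
by apply/in_span_tangentP; exists a.
Qed.

Lemma rank_at_LLR_sample_size fstar th : fth f th = fstar ->
  exists r, [/\ rank_at f th r, forall r', rank_at f th r' -> (r <= r')%N,
    n_sample_LLR f l fstar r &
    forall n (xs : 'I_n -> X), LLR_guarantee f l fstar th xs -> (r <= n)%N].
Proof.
move=> th_fstar.
have [r [b [ys lb]]] := lagrange_basis_exists 0 M (tangent_family th).
exists r; split.
- exact: lagrange_rank_at lb.
- exact: lagrange_le_rank_at lb.
- have [_ _ bys] := lb; exists (fun k : 'I_r => ys k), th.
  split; first exact: lagrange_nodes_injective bys.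
  split=> //; apply/(LLR_guaranteeP _ th_fstar).
  exact: lagrange_nodes_unisolvent lb.
- by move=> n xs /(LLR_guaranteeP _ th_fstar); apply: (lagrange_le_unisolvent lb).
Qed.

End Loss.
End Tangent.

Theorem mainTheorem4 (R : realType) (d M : nat)
  (f : 'rV[R]_d -> 'rV[R]_M -> R) (l : R -> R -> R)
  (hf : is_model f) (hl : is_loss l)
  (fstar : 'rV[R]_d -> R) (hfstar : exists th : 'rV[R]_M, fth f th = fstar) :
  exists n : nat,
    is_optimistic_sample_size f l fstar n /\ is_model_rank f fstar n.
Proof.
have [l_ge0 l_eq0 _ _] := hl.
have at_th := rank_at_LLR_sample_size (f := f) l_ge0 l_eq0 (fstar := fstar).
have [th0 th0_fstar] := hfstar.
have ex_sample : exists n, `[< n_sample_LLR f l fstar n >].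
  by have [r [_ _ r_LLR _]] := at_th th0 th0_fstar; exists r; apply/asboolP.
have [n /asboolP n_LLR n_min] := ex_minnP ex_sample.
have n_le m : n_sample_LLR f l fstar m -> (n <= m)%N by move=> /asboolP/n_min.
exists n; split=> //; split.
- have [xs [th [_ [th_fstar xs_LLR]]]] := n_LLR.
  have [r [th_r _ r_LLR r_le]] := at_th th th_fstar.
  suff -> : n = r by exists th.
  by apply/eqP; rewrite eqn_leq n_le // (r_le _ xs).
- move=> th r' th_fstar th_r'.
  have [r [_ r_le' r_LLR _]] := at_th th th_fstar.
  exact: leq_trans (n_le _ r_LLR) (r_le' _ th_r').
Qed.
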